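(* Let $\widehat G$ be a countable discrete abelian group, $m$ a probability measure on $\widehat G$ with $m(\{\chi\})>0$ for all $\chi$, and $m^{\mathbf D}$ the product measure on $\widehat G^{\mathbf D}$. For $g,g'\in\widehat G_{fr}$, the measures $g_*m^{\mathbf D}$ and $g'_*m^{\mathbf D}$ are mutually singular if and only if there exists $d\in\mathbf D$ with $g(d)_*m\ne g'(d)_*m$; otherwise they are equal. If $\widehat G$ is torsion free, then the measures $g_*m^{\mathbf D}$, $g\in\widehat G_{fr}$, are pairwise mutually singular (for distinct $g$).
   Context: $\mathbf D=\{a/2^n:n\ge1,0\le a\le2^n-1\}\subset[0,1)$. A standard dyadic partition (s.d.p.) is $0=d_1<\dots<d_{n+1}=1$ with each $(d_j,d_{j+1})$ of the form $(a/2^k,(a+1)/2^k)$. $\widehat G_{fr}$ is the group (pointwise multiplication) of maps $g:\mathbf D\to\widehat G$ for which there is an s.d.p. such that $g$ is constant on each $[d_j,d_{j+1})\cap\mathbf D$. $\widehat G_{fr}$ acts on $\widehat G^{\mathbf D}$ by $(gy)(d)=g(d)y(d)$, and $g_*m^{\mathbf D}$ is the pushforward of $m^{\mathbf D}$ under $y\mapsto gy$; for $\chi\in\widehat G$, $\chi_*m$ is the pushforward of $m$ under translation by $\chi$. *)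

From HB Require Import structures.
From mathcomp Require Import all_boot all_order all_algebra.
From mathcomp Require Import all_classical all_reals all_analysis.

Set Implicit Arguments.
Unset Strict Implicit.
Unset Printing Implicit Defensive.

Import Order.TTheory GRing.Theory Num.Theory.
Local Open Scope classical_set_scope.
Local Open Scope ring_scope.

Definition dyadicP (q : rat) : Prop :=
  exists n a : nat, (1 <= n)%N /\ (a <= 2 ^ n - 1)%N /\ q = a%:R / (2 ^ n)%:R.

Definition D : Type := {q : rat | `[< dyadicP q >]}.
HB.instance Definition _ := [isSub for (@sval rat (fun q => `[< dyadicP q >]))].
HB.instance Definition _ := [Countable of D by <:].

(* A standard dyadic partition 0 = d_1 < ... < d_{n+1} = 1, n >= 1, given as
   the sequence [:: d_1; ...; d_{n+1}], each (d_j, d_{j+1}) being of the form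
   (a/2^k, (a+1)/2^k). *)
Definition is_sdp (s : seq rat) : Prop :=
  (2 <= size s)%N /\ head 0 s = 0 /\ last 0 s = 1 /\
  forall j : nat, (j.+1 < size s)%N ->
    exists k a : nat, nth 0 s j = a%:R / (2 ^ k)%:R /\
                      nth 0 s j.+1 = a.+1%:R / (2 ^ k)%:R.

Definition is_fr (G : Type) (g : D -> G) : Prop :=
  exists s : seq rat, is_sdp s /\
    forall j : nat, (j.+1 < size s)%N ->
      forall d d' : D,
        nth 0 s j <= sval d < nth 0 s j.+1 ->
        nth 0 s j <= sval d' < nth 0 s j.+1 -> g d = g d'.

Definition disc (G : countZmodType) : Type := G.
HB.instance Definition _ (G : countZmodType) := Countable.on (disc G).
HB.instance Definition _ (G : countZmodType) := isPointed.Build (disc G) 0.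
HB.instance Definition _ (G : countZmodType) :=
  @isMeasurable.Build default_measure_display (disc G) discrete_measurable
    discrete_measurable0 discrete_measurableC discrete_measurableU.

Definition conf (G : countZmodType) : Type := D -> G.
HB.instance Definition _ (G : countZmodType) := gen_eqMixin (conf G).
HB.instance Definition _ (G : countZmodType) := gen_choiceMixin (conf G).
HB.instance Definition _ (G : countZmodType) :=
  isPointed.Build (conf G) (fun _ => 0).

Definition cylinders (G : countZmodType) : set (set (conf G)) :=
  [set B | exists (d : D) (A : set G), B = [set y : conf G | A (y d)]].

Notation Cfg G := (g_sigma_algebraType (@cylinders G)).

(* The infinite product measure m^D on Ghat^D: the (unique) probability
   measure on the product sigma-algebra whose value on finite-dimensional
   cylinders is the product of the values of m. *)
Definition is_product_measure (R : realType) (G : countZmodType)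
    (m : set (disc G) -> \bar R) (P : set (Cfg G) -> \bar R) : Prop :=
  forall (ds : seq D) (A : D -> set G), uniq ds ->
    P [set y : Cfg G | forall d, d \in ds -> A d (y d)] =
    (\prod_(d <- ds) m (A d))%E.

(* the action of Ghat_fr on Ghat^D: (g y)(d) = g(d) y(d) (written additively) *)
Definition act (G : countZmodType) (g : D -> G) : Cfg G -> Cfg G :=
  fun y d => g d + y d.

Definition transl (G : countZmodType) (chi : G) : disc G -> disc G :=
  fun x => chi + x.

Definition meq d (T : measurableType d) (R : realType) (mu nu : set T -> \bar R) : Prop :=
  forall A, measurable A -> mu A = nu A.

Definition msingular d (T : measurableType d) (R : realType) (mu nu : set T -> \bar R) : Prop :=
  exists A, measurable A /\ mu A = 0%E /\ nu (~` A) = 0%E.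

Definition torsion_free (G : zmodType) : Prop :=
  forall (x : G) (n : nat), (0 < n)%N -> x *+ n = 0 -> x = 0.

From HB Require Import structures.
From mathcomp Require Import all_boot all_order all_algebra.
From mathcomp Require Import all_classical all_reals all_analysis.
From mathcomp Require Import ring lra.
Import Order.TTheory GRing.Theory Num.Theory.
Local Open Scope classical_set_scope.
Local Open Scope ring_scope.

(* If all one-dimensional marginals g(d)_*m and g'(d)_*m agree, the two shifted
   product measures agree on finite cylinders, a pi-system generating the
   product sigma-algebra, so they are equal.  If they differ at some d, choose
   A with p = g(d)_*m(A) <> g'(d)_*m(A) = q.  As g and g' are constant on a
   dyadic interval to the right of d, there are infinitely many dyadic points
   e_i with g(e_i) = g(d) and g'(e_i) = g'(d); under the two measures the events
   {y(e_i) \in A} are then independent with probabilities p and q.  The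
   likelihood-ratio test on n of them errs under either measure with
   probability at most rho^n, where rho = sqrt(pq) + sqrt((1-p)(1-q)) < 1 is the
   Hellinger affinity, and Borel-Cantelli turns these tests into a separating
   set.  For torsion-free groups, chi_*m = chi'_*m with chi <> chi' would make m
   invariant under translation by an element of infinite order, which is
   impossible for a probability measure charging points. *)

Section hellinger.
Context {R : realType}.
Implicit Types p q : R.

Definition bernoulli_wt p {n} (f : {ffun 'I_n -> bool}) : R :=
  \prod_(i < n) (if f i then p else 1 - p).

Definition hellinger p q : R :=
  Num.sqrt (p * q) + Num.sqrt ((1 - p) * (1 - q)).

Lemma bernoulli_wt_ge0 p {n} (f : {ffun 'I_n -> bool}) :
  0 <= p <= 1 -> 0 <= bernoulli_wt p f.
Proof.
by case/andP=> p0 p1; apply: prodr_ge0 => i _; case: (f i); rewrite ?subr_ge0.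
Qed.

Lemma sqrtr_prod (I : finType) (x : I -> R) : (forall i, 0 <= x i) ->
  Num.sqrt (\prod_i x i) = \prod_i Num.sqrt (x i).
Proof.
move=> x_ge0; pose K (a b : R) := 0 <= a /\ Num.sqrt a = b.
suff [] : K (\prod_i x i) (\prod_i Num.sqrt (x i)) by [].
apply: (big_ind2 K) => [|a1 b1 a2 b2 [a1_ge0 <-] [a2_ge0 <-]|i _] //.
- by split; rewrite ?sqrtr1.
- by split; [exact: mulr_ge0 | rewrite sqrtrM].
Qed.

Lemma sum_sqrt_bernoulli_wtM p q n : 0 <= p <= 1 -> 0 <= q <= 1 ->
  \sum_(f : {ffun 'I_n -> bool}) Num.sqrt (bernoulli_wt p f * bernoulli_wt q f)
  = hellinger p q ^+ n.
Proof.
move=> /andP[p0 p1] /andP[q0 q1].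
pose F (i : 'I_n) (b : bool) :=
  Num.sqrt ((if b then p else 1 - p) * (if b then q else 1 - q)).
transitivity (\sum_(f : {ffun 'I_n -> bool}) \prod_(i < n) F i (f i)).
  apply: eq_bigr => f _; rewrite /bernoulli_wt -big_split sqrtr_prod // => i.
  by case: (f i); rewrite mulr_ge0 ?subr_ge0.
rewrite -bigA_distr_bigA (eq_bigr (fun=> hellinger p q)) => [|i _].
  by rewrite prodr_const card_ord.
by rewrite big_bool.
Qed.

Lemma hellingerC p q : hellinger p q = hellinger q p.
Proof. by rewrite /hellinger mulrC [(1 - p) * _]mulrC. Qed.

Lemma hellinger_ge0 p q : 0 <= hellinger p q.
Proof. by rewrite addr_ge0 ?sqrtr_ge0. Qed.

(* Cauchy-Schwarz for (sqrt p, sqrt (1 - p)) and (sqrt q, sqrt (1 - q)), with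
   equality only for p = q. *)
Lemma hellinger_lt1 p q : 0 <= p <= 1 -> 0 <= q <= 1 -> p != q ->
  hellinger p q < 1.
Proof.
move=> /andP[p0 p1] /andP[q0 q1] pq.
rewrite /hellinger !sqrtrM ?subr_ge0 //.
set a := Num.sqrt p; set b := Num.sqrt q.
set c := Num.sqrt (1 - p); set d := Num.sqrt (1 - q).
have ha : a ^+ 2 = p by rewrite sqr_sqrtr.
have hb : b ^+ 2 = q by rewrite sqr_sqrtr.
have hc : c ^+ 2 = 1 - p by rewrite sqr_sqrtr ?subr_ge0.
have hd : d ^+ 2 = 1 - q by rewrite sqr_sqrtr ?subr_ge0.
have : 0 < (a - b) ^+ 2.
  rewrite exprn_even_gt0 // subr_eq0.
  by apply: contra pq => /eqP ab; rewrite -ha -hb ab.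
have : 0 <= (c - d) ^+ 2 by rewrite sqr_ge0.
move: ha hb hc hd; rewrite !expr2; nra.
Qed.

Lemma sum_bernoulli_wt_le_hellinger p q n (S : pred {ffun 'I_n -> bool}) :
  0 <= p <= 1 -> 0 <= q <= 1 ->
  (forall f, S f -> bernoulli_wt p f <= bernoulli_wt q f) ->
  \sum_(f | S f) bernoulli_wt p f <= hellinger p q ^+ n.
Proof.
move=> p01 q01 le_pq; rewrite -sum_sqrt_bernoulli_wtM // [leRHS](bigID S) /=.
rewrite -[leLHS]addr0 lerD ?sumr_ge0 //; apply: ler_sum => f Sf.
have wp_ge0 := bernoulli_wt_ge0 p f p01.
rewrite -{1}(ger0_norm wp_ge0) -sqrtr_sqr ler_sqrt ?expr2 ?ler_wpM2l ?le_pq //.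
by rewrite mulr_ge0 // (le_trans wp_ge0) ?le_pq.
Qed.

End hellinger.

Lemma nneseries_le_halfpow_lty {R : realType} (u : (\bar R)^nat) :
  (forall k, 0 <= u k)%E -> (forall k, u k <= (1 / (2 ^ (k + 1))%:R)%:E)%E ->
  (\sum_(0 <= k <oo) u k < +oo)%E.
Proof.
move=> u_ge0 u_le; apply: (@le_lt_trans _ _ (\sum_(0 <= k <oo)
  ((1 / (2 ^ (k + 1))%:R : R)%:E))%E); first exact: lee_nneseries.
have /cvg_lim -> // := @cvg_geometric_eseries_half R 1 0.
by rewrite ltry.
Qed.

Lemma setC_lim_sup_set T (F : (set T)^nat) :
  ~` lim_sup_set F `<=` lim_sup_set (fun k => ~` F k).
Proof.
move=> z nF k _; apply: contrapT => nFk; apply: nF => n _.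
exists (maxn n k); first by rewrite /= leq_maxl.
by apply: contrapT => Fz; apply: nFk; exists (maxn n k); rewrite /= ?leq_maxr.
Qed.

Lemma measurable_lim_sup_set d (T : measurableType d) (F : (set T)^nat) :
  (forall k, measurable (F k)) -> measurable (lim_sup_set F).
Proof.
by move=> mF; apply: bigcapT_measurable => n; apply: bigcup_measurable => k _.
Qed.

Section bernoulli_patterns.
Context {d} {T : measurableType d} {R : realType}.
Variable X : nat -> set T.
Hypothesis mX : forall i, measurable (X i).

Definition pattern n (z : T) : {ffun 'I_n -> bool} :=
  [ffun i : 'I_n => `[< X i z >]].

Lemma measurable_pattern_eq n (f : {ffun 'I_n -> bool}) :
  measurable [set z | pattern n z = f].
Proof.
rewrite (_ : [set z | _] =
    \bigcap_(i in [set: 'I_n]) (if f i then X i else ~` X i)).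
  apply: fin_bigcap_measurable => // i _.
  by case: (f i); [exact: mX | exact/measurableC/mX].
apply/seteqP; split => z /=.
  by move=> <- i _; rewrite ffunE; case: asboolP.
move=> Xz; apply/ffunP => i; rewrite ffunE.
by move: (Xz i I); case: (f i) => ?; [exact/asboolT | exact/asboolF].
Qed.

Lemma pattern_predE n (S : pred {ffun 'I_n -> bool}) :
  [set z | S (pattern n z)] = \bigcup_(f in [set` S]) [set z | pattern n z = f].
Proof.
by apply/seteqP; split => z /=; [exists (pattern n z) | case=> f Sf ->].
Qed.

Lemma measurable_pattern_pred n (S : pred {ffun 'I_n -> bool}) :
  measurable [set z | S (pattern n z)].
Proof.
rewrite pattern_predE; apply: fin_bigcup_measurable => [|f _].
  exact: finite_finset.
exact: measurable_pattern_eq.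
Qed.

Lemma measure_pattern_pred (mu : {measure set T -> \bar R}) n
    (S : pred {ffun 'I_n -> bool}) :
  mu [set z | S (pattern n z)] = (\sum_(f | S f) mu [set z | pattern n z = f])%E.
Proof.
rewrite pattern_predE measure_fin_bigcup //.
- rewrite -(@bigfs _ _ _ _ (index_enum _)) ?index_enum_uniq // => f.
  by rewrite mem_index_enum.
- by move=> f f' _ _ [z [/= <- <-]].
- by move=> f _; exact: measurable_pattern_eq.
Qed.

(* The likelihood-ratio test F k on the first N k events errs with probability
   at most hellinger p q ^+ N k <= 2^-(k+1) under both P and Q, so by
   Borel-Cantelli it is eventually right almost surely under each. *)
Lemma msingular_bernoulli_patterns (P Q : {measure set T -> \bar R}) (p q : R) :
  0 <= p <= 1 -> 0 <= q <= 1 -> p != q ->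
  (forall n (f : {ffun 'I_n -> bool}),
     P [set z | pattern n z = f] = (bernoulli_wt p f)%:E) ->
  (forall n (f : {ffun 'I_n -> bool}),
     Q [set z | pattern n z = f] = (bernoulli_wt q f)%:E) ->
  msingular P Q.
Proof.
move=> p01 q01 pq Pf Qf.
have h_ge0 := hellinger_ge0 p q.
have /choice[N leN] : forall k, exists n,
    hellinger p q ^+ n <= 1 / (2 ^ (k + 1))%:R.
  move=> k; have h_lt1 : `|hellinger p q| < 1.
    by rewrite ger0_norm ?hellinger_lt1.
  have eps_gt0 : 0 < 1 / (2 ^ (k + 1))%:R :> R.
    by rewrite divr_gt0 ?ltr0n ?expn_gt0.
  have [n _ le_eps] := cvgr0_norm_le _ (cvg_expr h_lt1) _ eps_gt0.
  by exists n; rewrite -(ger0_norm (exprn_ge0 n h_ge0)); apply: le_eps => /=.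
pose S n : pred {ffun 'I_n -> bool} :=
  fun f => bernoulli_wt p f <= bernoulli_wt q f.
pose F k := [set z | S (N k) (pattern (N k) z)].
have mF k : measurable (F k) by exact: measurable_pattern_pred.
have PF k : (P (F k) <= (1 / (2 ^ (k + 1))%:R)%:E)%E.
  rewrite measure_pattern_pred (eq_bigr _ (fun f _ => Pf _ f)) sumEFin lee_fin.
  by rewrite (le_trans _ (leN k)) // sum_bernoulli_wt_le_hellinger.
have QFC k : (Q (~` F k) <= (1 / (2 ^ (k + 1))%:R)%:E)%E.
  have -> : ~` F k = [set z | predC (S (N k)) (pattern (N k) z)].
    by apply/seteqP; split => z /= /negP.
  rewrite measure_pattern_pred (eq_bigr _ (fun f _ => Qf _ f)) sumEFin lee_fin.
  rewrite (le_trans _ (leN k)) // hellingerC sum_bernoulli_wt_le_hellinger //.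
  by move=> f /=; rewrite -ltNge => /ltW.
have mFC k : measurable (~` F k) by exact: measurableC.
exists (lim_sup_set F); split; first exact: measurable_lim_sup_set.
split; first by apply: lim_sup_set_cvg0 => //; exact: nneseries_le_halfpow_lty.
apply/eqP; rewrite eq_le measure_ge0 andbT.
have QFC_lty := nneseries_le_halfpow_lty _ (fun=> measure_ge0 _ _) QFC.
rewrite -(lim_sup_set_cvg0 (mu := Q) mFC QFC_lty).
apply: le_measure; rewrite ?inE; last exact: setC_lim_sup_set.
- exact/measurableC/measurable_lim_sup_set.
- exact: measurable_lim_sup_set.
Qed.

End bernoulli_patterns.

Lemma dyadic_itv01 (d : D) : 0 <= sval d < 1.
Proof.
case: d => q /= /asboolP[n [a [n1 [an ->]]]].
rewrite divr_ge0 ?ler0n //= ltr_pdivrMr ?ltr0n ?expn_gt0 // mul1r ltr_nat.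
by rewrite (leq_ltn_trans an) // subn1 prednK ?expn_gt0.
Qed.

Lemma exists_switch (P : nat -> bool) N : P 0%N -> ~~ P N ->
  exists2 j, (j < N)%N & P j && ~~ P j.+1.
Proof.
move=> P0; elim: N => [|N IH NPN]; first by rewrite P0.
case PN: (P N); first by exists N; rewrite ?PN.
by have [j jN Pj] := IH (negbT PN); exists j; rewrite // ltnW.
Qed.

Lemma sdp_cover {s : seq rat} {x : rat} : is_sdp s -> 0 <= x < 1 ->
  exists2 j, (j.+1 < size s)%N & nth 0 s j <= x < nth 0 s j.+1.
Proof.
move=> [s2 [s_head [s_last _]]] /andP[x0 x1].
have [||j js /andP[sj sj1]] :=
  @exists_switch (fun j => nth 0 s j <= x) (size s).-1.
- by rewrite nth0 s_head.
- by rewrite nth_last s_last -ltNge.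
by exists j; rewrite -?ltn_predRL // sj ltNge.
Qed.

Lemma is_fr_right_const {T : Type} {g : D -> T} (d : D) : is_fr g ->
  exists2 r : rat, sval d < r &
    forall d' : D, sval d <= sval d' < r -> g d' = g d.
Proof.
move=> [s [sdp g_const]].
have [j js /andP[sj dsj1]] := sdp_cover sdp (dyadic_itv01 d).
exists (nth 0 s j.+1) => // d' /andP[dd' d's].
by apply: (g_const j js); rewrite ?sj ?(le_trans sj dd').
Qed.

Lemma dyadicP_add_invexp2 (a n k : nat) : (1 <= n <= k)%N ->
  a%:R / (2 ^ n)%:R + ((2 ^ k)%:R)^-1 < 1 :> rat ->
  dyadicP (a%:R / (2 ^ n)%:R + ((2 ^ k)%:R)^-1).
Proof.
case/andP=> n1 nk; set b := (a * 2 ^ (k - n) + 1)%N.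
have -> : a%:R / (2 ^ n)%:R + ((2 ^ k)%:R)^-1 = b%:R / (2 ^ k)%:R :> rat.
  have two_pow_neq0 i : (2 ^ i)%:R != 0 :> rat by rewrite pnatr_eq0 expn_eq0.
  rewrite -(subnK nk) expnD natrD !natrM; field.
  by rewrite !two_pow_neq0.
rewrite ltr_pdivrMr ?ltr0n ?expn_gt0 // mul1r ltr_nat => b_lt.
exists k, b; split; first exact: leq_trans nk.
by split => //; rewrite -ltnS subn1 prednK ?expn_gt0.
Qed.

Lemma dyadic_injective_seq (d : D) (r : rat) : sval d < r -> r <= 1 ->
  exists2 e : nat -> D, injective e & forall i, sval d < sval (e i) < r.
Proof.
case: d => x /= /asboolP[n [a [n1 [_ xE]]]] xr r1.
pose K := (n + Num.Def.archi_bound (r - x)^-1)%N.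
have small i : ((2 ^ (K + i))%:R)^-1 < r - x.
  rewrite -[r - x]invrK ltf_pV2 ?posrE ?invr_gt0 ?subr_gt0 ?ltr0n ?expn_gt0 //.
  by rewrite natrX upper_nthrootP // /K addnAC leq_addl.
have e_dyadic i : dyadicP (x + ((2 ^ (K + i))%:R)^-1).
  rewrite xE; apply: dyadicP_add_invexp2; first by rewrite n1 /K -addnA leq_addr.
  by rewrite -xE (lt_le_trans _ r1) // -ltrBrDl small.
exists (fun i => exist (fun q => `[< dyadicP q >]) _ (asboolT (e_dyadic i)) : D).
  move=> i j /(congr1 sval) /= /addrI /invr_inj /eqP.
  by rewrite eqr_nat eqn_exp2l // eqn_add2l => /eqP.
by move=> i /=; rewrite ltrDl invr_gt0 ltr0n expn_gt0 -ltrBrDl small.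
Qed.

Lemma is_fr_const_injective_seq {T : Type} {g g' : D -> T} (d : D) :
  is_fr g -> is_fr g' ->
  exists2 e : nat -> D, injective e & forall i, g (e i) = g d /\ g' (e i) = g' d.
Proof.
move=> /(is_fr_right_const d)[r dr g_const].
move=> /(is_fr_right_const d)[r' dr' g'_const].
have [||e e_inj e_itv] := @dyadic_injective_seq d (Num.min (Num.min r r') 1).
- by rewrite !lt_min dr dr' (proj2 (andP (dyadic_itv01 d))).
- by rewrite ge_min lexx orbT.
exists e => // i; have /andP[de] := e_itv i.
rewrite !lt_min => /andP[/andP[er er'] _].
by split; [apply: g_const | apply: g'_const]; rewrite ltW.
Qed.

Section configurations.
Context (G : countZmodType).

Lemma measurable_cylinder (d : D) (A : set G) :
  measurable [set y : Cfg G | A (y d)].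
Proof. by apply: sub_sigma_algebra; exists d, A. Qed.

Lemma measurable_finite_cylinder (ds : seq D) (A : D -> set G) :
  measurable [set z : Cfg G | forall d, d \in ds -> A d (z d)].
Proof.
rewrite (_ : [set z | _] = \bigcap_(d in [set` ds]) [set z : Cfg G | A d (z d)]).
  by apply: fin_bigcap_measurable => // d _; exact: measurable_cylinder.
by apply/seteqP; split => z /= Az d; apply: Az.
Qed.

Lemma measurable_act (g : D -> G) : measurable_fun setT (act g : Cfg G -> Cfg G).
Proof.
apply: (@measurability _ _ (Cfg G) (Cfg G) _ _ (@cylinders G) erefl).
move=> _ [_ [d [A ->]] <-].
by rewrite setTI; exact: (measurable_cylinder d (fun w => A (g d + w))).
Qed.

Definition finite_cylinders : set (set (Cfg G)) :=
  [set B | exists ds (A : D -> set G),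
     uniq ds /\ B = [set z | forall d, d \in ds -> A d (z d)]].

Lemma measurable_finite_cylinders :
  @measurable _ (Cfg G) = <<s finite_cylinders >>.
Proof.
apply/seteqP; split.
  apply: sub_sigma_algebra2 => _ [d [A ->]].
  exists [:: d], (fun=> A); split => //; apply/seteqP; split => z /=.
    by move=> Az d'; rewrite inE => /eqP ->.
  by apply; rewrite mem_head.
apply: smallest_sub; first exact: sigma_algebra_measurable.
by move=> _ [ds [A [_ ->]]]; exact: measurable_finite_cylinder.
Qed.

Lemma setI_closed_finite_cylinders : setI_closed finite_cylinders.
Proof.
move=> _ _ [ds1 [A1 [_ ->]]] [ds2 [A2 [_ ->]]].
exists (undup (ds1 ++ ds2)), (fun d => (if d \in ds1 then A1 d else setT) `&`
  (if d \in ds2 then A2 d else setT)); split; first exact: undup_uniq.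
apply/seteqP; split => z /=.
  by move=> [A1z A2z] d _; split; case: ifP => // dds; [exact: A1z | exact: A2z].
move=> Az; split => d dds; have [] := Az d.
- by rewrite mem_undup mem_cat dds.
- by rewrite dds.
- by rewrite mem_undup mem_cat dds orbT.
- by rewrite dds.
Qed.

End configurations.

#[global] Hint Resolve measurable_act : core.

Lemma meq_msingular_setT {d} {T : measurableType d} {R : realType}
    {mu nu : {measure set T -> \bar R}} :
  meq mu nu -> msingular mu nu -> mu setT = 0%E.
Proof.
move=> mu_nu [A [mA [muA nuAC]]].
have mAC : measurable (~` A) by exact: measurableC.
rewrite -(setUv A) measureU ?setICr // -[RHS]adde0.
by congr (_ + _); [exact: muA | rewrite -nuAC; exact: mu_nu].
Qed.

Lemma probability_EFin {d} {T : measurableType d} {R : realType}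
    (P : probability T R) {A : set T} :
  measurable A -> exists2 p : R, P A = p%:E & 0 <= p <= 1.
Proof.
move=> mA; have : (0 <= P A <= 1)%E by rewrite measure_ge0 probability_le1.
case: (P A) => [p /andP[p0 p1]||]; last by rewrite leNye.
  by exists p; rewrite // -!lee_fin p0.
by rewrite leye_eq andbF.
Qed.

Section shifted_product_measures.
Context {R : realType} {G : countZmodType} {m : probability (disc G) R}
  {mD : probability (Cfg G) R} (mD_prod : is_product_measure m mD).

Local Notation pm a := (pushforward m (transl a)).

Lemma pushforward_act_setT g : pushforward mD (act g) setT = 1%E.
Proof. by rewrite /pushforward preimage_setT probability_setT. Qed.

Lemma pushforward_act_finite_cylinder g ds (A : D -> set G) : uniq ds ->
  pushforward mD (act g) [set z | forall d, d \in ds -> A d (z d)] =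
  (\prod_(d <- ds) pm (g d) (A d))%E.
Proof. exact: (mD_prod ds (fun d => transl (g d) @^-1` A d)). Qed.

Lemma pushforward_act_eq {g g' : D -> G} :
  (forall d, meq (pm (g d)) (pm (g' d))) ->
  meq (pushforward mD (act g)) (pushforward mD (act g')).
Proof.
move=> marg_eq A mA.
apply: (measure_unique (finite_cylinders G) (fun=> setT)
  (measurable_finite_cylinders G) (setI_closed_finite_cylinders G) _ _
  (pushforward mD (act g)) (pushforward mD (act g'))) => //.
- by move=> _; exists [::], (fun=> setT); split => //; apply/seteqP; split => z.
- by apply/seteqP; split => z // _; exists 0%N.
- move=> _ [ds [B [ds_uniq ->]]].
  rewrite /= !pushforward_act_finite_cylinder //.
  by apply: eq_bigr => d _; exact: marg_eq.
- by move=> _; exact: le_lt_trans (probability_le1 mD measurableT) (ltry 1).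
Qed.

Lemma pushforward_act_fin_cylinder g {I : finType} (E : I -> D) (B : I -> set G) :
  injective E ->
  pushforward mD (act g) [set z | forall i, B i (z (E i))] =
  (\prod_i pm (g (E i)) (B i))%E.
Proof.
move=> E_inj; pose A d := [set w : G | forall i, E i = d -> B i w].
have ds_uniq : uniq [seq E i | i <- enum I] by rewrite map_inj_uniq ?enum_uniq.
rewrite (_ : [set z | _] =
    [set z | forall d, d \in [seq E i | i <- enum I] -> A d (z d)]).
  rewrite pushforward_act_finite_cylinder // big_map big_enum /=.
  apply: eq_bigr => i _; congr (pm _ _); apply/seteqP; split => w /=.
    by apply.
  by move=> Bw j /E_inj ->.
apply/seteqP; split => z /= Bz.
  by move=> _ /mapP[j _ ->] i /E_inj ->.
by move=> i; apply: (Bz (E i)) => //; apply: map_f; rewrite mem_enum.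
Qed.

Lemma pushforward_transl_setC a (X : set G) : pm a (~` X) = (1 - pm a X)%E.
Proof. by rewrite /pushforward -preimage_setC probability_setC. Qed.

Lemma pushforward_act_pattern g (e : nat -> D) (A0 : set G) (a : G) (p : R) :
  injective e -> (forall i, g (e i) = a) -> pm a A0 = p%:E ->
  forall n (f : {ffun 'I_n -> bool}),
  pushforward mD (act g)
    [set z | pattern (fun i => [set z : Cfg G | A0 (z (e i))]) n z = f] =
  (bernoulli_wt p f)%:E.
Proof.
move=> e_inj ge pA0 n f.
rewrite (_ : [set z | _] = [set z | forall i : 'I_n,
    [set w | `[< A0 w >] = f i] (z (e i))]); last first.
  apply/seteqP; split => z /= => [<- i | zf]; first by rewrite ffunE.
  by apply/ffunP => i; rewrite ffunE zf.
rewrite (pushforward_act_fin_cylinder g (fun i : 'I_n => e i)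
  (fun i => [set w | `[< A0 w >] = f i])); last by move=> i j /e_inj /val_inj.
rewrite -prodEFin; apply: eq_bigr => i _; rewrite ge.
case: (f i); [rewrite -pA0 | rewrite EFinB -pA0 -pushforward_transl_setC].
all: by congr (pm a _); apply/seteqP; split => w /=; case: asboolP.
Qed.

Lemma msingular_act_of_marginal_neq g g' d : is_fr g -> is_fr g' ->
  ~ meq (pm (g d)) (pm (g' d)) ->
  msingular (pushforward mD (act g)) (pushforward mD (act g')).
Proof.
move=> fr fr' /existsNP[A0 /not_implyP[_ neqA0]].
have [e e_inj e_const] := is_fr_const_injective_seq d fr fr'.
have [p pA0 p01] : exists2 p : R, pm (g d) A0 = p%:E & 0 <= p <= 1.
  exact: probability_EFin.
have [q qA0 q01] : exists2 q : R, pm (g' d) A0 = q%:E & 0 <= q <= 1.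
  exact: probability_EFin.
apply: (@msingular_bernoulli_patterns _ _ _
  (fun i => [set z : Cfg G | A0 (z (e i))]) _ _ _ p q p01 q01).
- by move=> i; exact: measurable_cylinder.
- by apply/eqP => pq; apply: neqA0; rewrite pA0 qA0 pq.
- by apply: pushforward_act_pattern pA0 => // i; case: (e_const i).
- by apply: pushforward_act_pattern qA0 => // i; case: (e_const i).
Qed.

End shifted_product_measures.

Lemma probability_injective_points_const0 {d} {T : measurableType d}
    {R : realType} (P : probability T R) {x : nat -> T} {c : \bar R} :
  injective x -> (forall k, measurable [set x k]) ->
  (forall k, P [set x k] = c) -> c = 0%E.
Proof.
move=> x_inj mx Px; have [r Pr r01] := probability_EFin P (mx 0%N).
have c_r : c = r%:E by rewrite -Pr Px.
suff r0 : r = 0 by rewrite c_r r0.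
have {}Px k : P [set x k] = r%:E by rewrite Px.
have x_triv : trivIset setT (fun k => [set x k]).
  by move=> i j _ _ [z [/= -> /x_inj]].
have P_bigU n : P (\big[setU/set0]_(k < n) [set x k]) = (n%:R * r)%:E.
  transitivity (\sum_(k < n) P [set x k])%E.
    exact: (measure_bigsetU P mx x_triv).
  rewrite (eq_bigr (fun=> r%:E)) => [|k _]; last exact: Px.
  by rewrite sumEFin sumr_const card_ord mulr_natl.
apply/eqP; rewrite eq_le (andP r01).1 andbT leNgt; apply/negP => r_gt0.
pose N := Num.Def.archi_bound r^-1.
have mU : measurable (\big[setU/set0]_(k < N) [set x k]).
  by apply: bigsetU_measurable => k _; exact: mx.
have := probability_le1 P mU.
rewrite P_bigU lee_fin; apply/negP; rewrite -ltNge -ltr_pdivrMr // div1r.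
by apply: archi_boundP; rewrite invr_ge0 ltW.
Qed.

Lemma torsion_free_mulrn_inj {G : zmodType} {c : G} :
  torsion_free G -> c != 0 -> injective (fun k : nat => c *+ k).
Proof.
move=> tf c_neq0; suff le_inj j k : (j <= k)%N -> c *+ j = c *+ k -> j = k.
  move=> j k; case/orP: (leq_total j k) => [/le_inj//|kj /esym].
  by move/(le_inj _ _ kj).
move=> jk cjk.
have ckj : c *+ (k - j) = 0.
  by apply: (@addrI _ (c *+ j)); rewrite addr0 -mulrnDr subnKC.
case: (posnP (k - j)) => [/eqP|kj_gt0].
  by rewrite subn_eq0 => kj; apply/eqP; rewrite eqn_leq jk kj.
by move: c_neq0; rewrite (tf _ _ kj_gt0 ckj) eqxx.
Qed.

Section translates.
Context {R : realType} {G : countZmodType} (m : probability (disc G) R).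

Lemma pushforward_transl_set1 a y :
  pushforward m (transl a) [set y] = m [set y - a].
Proof.
rewrite /pushforward; congr (m _); apply/seteqP; split => w; rewrite /transl /=.
  by move=> <-; rewrite addrC addKr.
by move=> ->; rewrite addrC subrK.
Qed.

Lemma pushforward_transl_neq a b :
  torsion_free G -> (0 < m [set (0 : G)%R])%E -> a != b ->
  ~ meq (pushforward m (transl a)) (pushforward m (transl b)).
Proof.
move=> tf m0_gt0 ab ab_eq; pose c := b - a.
have shift y : m [set y + c] = m [set y].
  have := ab_eq [set y + b] I; rewrite !pushforward_transl_set1 addrK.
  by rewrite /c addrA.
have m_mulrn k : m [set c *+ k] = m [set 0].
  by elim: k => [|k IH]; rewrite ?mulr0n // mulrSr shift.
have c_neq0 : c != 0 by rewrite subr_eq0 eq_sym.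
move: m0_gt0; rewrite (probability_injective_points_const0 m
  (torsion_free_mulrn_inj tf c_neq0) (fun=> I) m_mulrn).
by rewrite ltxx.
Qed.

End translates.

Theorem lemma3p9 (R : realType) (G : countZmodType)
  (m : probability (disc G) R)
  (m_pos : forall chi : disc G, (0 < m [set chi])%E)
  (mD : probability (Cfg G) R)
  (mD_prod : is_product_measure m mD) :
  (forall g g' : D -> G, is_fr g -> is_fr g' ->
     (msingular (pushforward mD (act g)) (pushforward mD (act g')) <->
      exists d : D,
        ~ meq (pushforward m (transl (g d))) (pushforward m (transl (g' d))))
     /\
     ((forall d : D,
         meq (pushforward m (transl (g d))) (pushforward m (transl (g' d)))) ->
      meq (pushforward mD (act g)) (pushforward mD (act g'))))
  /\
  (torsion_free G ->
   forall g g' : D -> G, is_fr g -> is_fr g' -> g <> g' ->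
     msingular (pushforward mD (act g)) (pushforward mD (act g'))).
Proof.
split=> [g g' fr fr' | tf g g' fr fr' g_neq].
  split; last exact: pushforward_act_eq.
  split=> [singular | [d]]; last exact: msingular_act_of_marginal_neq.
  apply: contrapT => /forallNP no_marg_neq.
  have marg_eq d : meq (pushforward m (transl (g d)))
                       (pushforward m (transl (g' d))).
    exact: contrapT (no_marg_neq d).
  have : pushforward mD (act g) setT = 0%E.
    exact: meq_msingular_setT (pushforward_act_eq mD_prod marg_eq) singular.
  by rewrite pushforward_act_setT; move/eqP; rewrite onee_eq0.
have /existsNP[d gd_neq] : ~ forall d, g d = g' d.
  by move=> gg'; apply: g_neq; apply/funext.
apply: (msingular_act_of_marginal_neq mD_prod g g' d fr fr').
by apply: pushforward_transl_neq tf (m_pos (0 : G)) _; apply/eqP.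
Qed.
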